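(* Let $n\ge2$, $A=\{a_1,\dots,a_k\}$ finite and $u_1,\dots,u_n:A\to\mathbb{R}$. In every subgame-perfect Nash equilibrium of the $P^{n-1}\&C$ game, each player $j\in\{2,\dots,n\}$ obtains payoff $\mathrm{Avg}_j$, and player 1 obtains payoff $\max(u)-\sum_{j=2}^n\mathrm{Avg}_j$.
   Context: Players have quasi-linear utilities $u_i(a)+t_i$. $\mathrm{Avg}_j=\frac1k\sum_{l=1}^k u_j(a_l)$ and $\max(u)=\max_{a\in A}\sum_{i=1}^n u_i(a)$. Let $P=\{p\in\mathbb{R}^k:\sum_j p_j=0\}$. The $P^{n-1}\&C$ game: player 1 chooses $p^2\in P$; then for $i=2,\dots,n-1$ in order, player $i$, having observed $p^2,\dots,p^i$, chooses $p^{i+1}\in P$; finally player $n$, having observed $p^2,\dots,p^n$, chooses an option $a\in A$. Payoffs: $g_1=u_1(a)+p^2(a)$; $g_m=u_m(a)-p^m(a)+p^{m+1}(a)$ for $2\le m\le n-1$; $g_n=u_n(a)-p^n(a)$. Pure strategies map histories to actions; a subgame-perfect Nash equilibrium is a profile inducing a Nash equilibrium in every subgame. *)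

From HB Require Import structures.
From mathcomp Require Import all_boot all_order all_algebra.
From mathcomp Require Export reals.
Set Implicit Arguments. Unset Strict Implicit. Unset Printing Implicit Defensive.
Import Order.TTheory GRing.Theory Num.Theory.
Local Open Scope ring_scope.

(* Players are indexed 1..n (nat); options form a finite type A (= {a_1,...,a_k}, k = #|A|). *)

Definition Pv (R : numDomainType) (A : finType) :=
  {p : A -> R | \sum_(a : A) p a == 0}.

Lemma zero_in_P (R : numDomainType) (A : finType) :
  \sum_(a : A) (fun _ : A => (0 : R)) a == 0.
Proof. by rewrite big1. Qed.

Definition p0 (R : numDomainType) (A : finType) : Pv R A :=
  exist _ (fun _ => 0) (zero_in_P R A).

(* A history is the sequence [p^2; ...; p^l] of price vectors chosen so far. *)
(* Pure strategy profile: player m (1 <= m <= n-1) chooses p^{m+1} as a function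
   of the history [p^2;...;p^m] (pstrat m); player n chooses an option as a
   function of the full history [p^2;...;p^n] (cstrat). *)
Record profile (R : numDomainType) (A : finType) := Profile {
  pstrat : nat -> seq (Pv R A) -> Pv R A;
  cstrat : seq (Pv R A) -> A }.

(* after history h (of size l), the player to move is player l+1 *)
Fixpoint extend (R : numDomainType) (A : finType) (s : profile R A)
    (fuel : nat) (h : seq (Pv R A)) : seq (Pv R A) :=
  match fuel with
  | 0 => h
  | f.+1 => extend s f (rcons h (pstrat s (size h).+1 h))
  end.

Definition full_history (R : numDomainType) (A : finType) (n : nat)
    (s : profile R A) (h : seq (Pv R A)) : seq (Pv R A) :=
  extend s (n.-1 - size h) h.

Definition outcome_option (R : numDomainType) (A : finType) (n : nat)
    (s : profile R A) (h : seq (Pv R A)) : A :=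
  cstrat s (full_history n s h).

Definition price (R : numDomainType) (A : finType) (hf : seq (Pv R A))
    (j : nat) (a : A) : R :=
  sval (nth (p0 R A) hf (j - 2)) a.

(* g_1 = u_1 + p^2, g_m = u_m - p^m + p^{m+1}, g_n = u_n - p^n *)
Definition payoff (R : numDomainType) (A : finType) (u : nat -> A -> R)
    (n m : nat) (hf : seq (Pv R A)) (a : A) : R :=
  u m a - (if (2 <= m)%N then price hf m a else 0)
        + (if (m < n)%N then price hf m.+1 a else 0).

Definition game_payoff (R : numDomainType) (A : finType) (u : nat -> A -> R)
    (n : nat) (s : profile R A) (h : seq (Pv R A)) (m : nat) : R :=
  payoff u n m (full_history n s h) (outcome_option n s h).

Definition deviation (R : numDomainType) (A : finType) (n i : nat)
    (s s' : profile R A) : Prop :=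
  (forall m, m != i -> pstrat s' m = pstrat s m) /\
  (i != n -> cstrat s' = cstrat s).

Definition is_SPE (R : numDomainType) (A : finType) (u : nat -> A -> R)
    (n : nat) (s : profile R A) : Prop :=
  forall h : seq (Pv R A), (size h <= n.-1)%N ->
  forall i, (1 <= i <= n)%N ->
  forall s', deviation n i s s' ->
    game_payoff u n s' h i <= game_payoff u n s h i.

Definition Avg (R : numFieldType) (A : finType) (u : nat -> A -> R) (j : nat) : R :=
  (#|A|%:R)^-1 * \sum_(a : A) u j a.

Definition sumu (R : numDomainType) (A : finType) (u : nat -> A -> R)
    (n : nat) (a : A) : R :=
  \sum_(1 <= i < n.+1) u i a.

(* max_{a in A} sum_i u_i(a); a0 is any element of A (result independent of it) *)
Definition maxu (R : realDomainType) (A : finType) (u : nat -> A -> R)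
    (n : nat) (a0 : A) : R :=
  \big[Num.max/sumu u n a0]_(a : A) sumu u n a.

From HB Require Import structures.
From mathcomp Require Import all_boot all_order all_algebra.
From mathcomp Require Import reals.
From mathcomp Require Import ring lra zify.
Import Order.TTheory GRing.Theory Num.Theory.
Set Implicit Arguments. Unset Strict Implicit.
Local Open Scope ring_scope.

(* Backward induction on the history. Write W_k for the total utility of players
   k..n. The induction hypothesis says that, once p^{m+1} is posted, the remaining
   players pick an option maximising W_{m+1} - p^{m+1} and player m+1 receives that
   maximum minus the averages Avg_{m+2}, ..., Avg_n. Since p^{m+1} sums to zero,
   the maximum is at least the mean of W_{m+1}, i.e. Avg_{m+1} + ... + Avg_n.
   Conversely, player m can post W_{m+1} minus its mean, lowered everywhere except
   at a chosen option by an arbitrarily small amount, and so obtain any option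
   while conceding only that mean. Hence in equilibrium player m+1 receives exactly
   Avg_{m+1}, and the option maximises player m's own net welfare; for m = 1 this
   is the total welfare, which gives max(u) - Avg_2 - ... - Avg_n. *)

Lemma natr_card_gt0 (R : numDomainType) (A : finType) (a : A) : 0 < #|A|%:R :> R.
Proof. by rewrite ltr0n; apply/card_gt0P; exists a. Qed.

Section LeaderFollower.

Variables (R : realFieldType) (A : finType) (W V : A -> R) (S : R).
Hypothesis sumV : \sum_a V a = #|A|%:R * S.
Variable br : Pv R A -> A.
Implicit Types p : Pv R A.
Hypothesis br_best : forall p a, V a - sval p a <= V (br p) - sval p (br p).

Local Notation follower p := (V (br p) - sval p (br p)).
Local Notation leader p := (W (br p) - follower p).

Lemma follower_ge_avg p : S <= follower p.
Proof.
rewrite -(ler_pM2l (natr_card_gt0 R (br p))) -sumV.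
have -> : \sum_a V a = \sum_a (V a - sval p a).
  by rewrite sumrB (eqP (valP p)) subr0.
by rewrite mulr_natl -sumr_const ler_sum.
Qed.

Lemma steer_price_subproof (t : A) (d : R) :
  \sum_a (V a - S - d * (#|A|%:R * (a == t)%:R - 1)) == 0.
Proof.
have sum_delta : \sum_a (a == t)%:R = 1 :> R.
  by rewrite (bigD1 t) //= eqxx big1 ?addr0 // => a /negbTE ->.
apply/eqP; rewrite !sumrB -mulr_sumr sumrB -mulr_sumr sum_delta !sumr_const sumV.
ring.
Qed.

(* The price [V - S], discounted by [d * (#|A| - 1)] at [t] and raised by [d] elsewhere,
   so that [t] is the follower's unique best reply. *)
Definition steer_price (t : A) (d : R) : Pv R A :=
  exist _ (fun a => V a - S - d * (#|A|%:R * (a == t)%:R - 1))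
    (steer_price_subproof t d).

Lemma br_steer_price t d : 0 < d -> br (steer_price t d) = t.
Proof.
move=> d_gt0; apply/eqP; apply/negPn/negP => /negbTE brt.
have kd_gt0 := mulr_gt0 d_gt0 (natr_card_gt0 R t).
have := br_best (steer_price t d) t; rewrite /= brt eqxx mulr0 mulr1; lra.
Qed.

Variable popt : Pv R A.
Hypothesis popt_best : forall p, leader p <= leader popt.

Lemma leader_ge t : W t - S <= leader popt.
Proof.
apply/ler_addgt0Pr => e e_gt0.
have k_gt0 := natr_card_gt0 R t.
pose d := e / #|A|%:R.
have d_gt0 : 0 < d by rewrite divr_gt0.
have dk : d * #|A|%:R = e by rewrite /d mulfVK // gt_eqF.
have := popt_best (steer_price t d).
rewrite br_steer_price //= eqxx mulr1 -dk; lra.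
Qed.

Lemma leader_follower_outcome :
  (forall a, W a <= W (br popt)) /\ follower popt = S.
Proof.
have := follower_ge_avg popt; have := leader_ge (br popt).
split; last by lra.
by move=> a; have := leader_ge a; lra.
Qed.

End LeaderFollower.

Section Histories.

Variables (R : numDomainType) (A : finType) (n : nat).
Implicit Types (s : profile R A) (h t : seq (Pv R A)) (p : Pv R A).

Lemma extend_cat s f h : exists t, extend s f h = h ++ t.
Proof.
elim: f h => [|f IH] h /=; first by exists [::]; rewrite cats0.
have [t ->] := IH (rcons h (pstrat s (size h).+1 h)).
by exists (pstrat s (size h).+1 h :: t); rewrite -cats1 -catA.
Qed.

Lemma full_history_rcons s h p : (size h < n.-1)%N ->
  pstrat s (size h).+1 h = p -> full_history n s h = full_history n s (rcons h p).
Proof.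
move=> hlt sp; rewrite /full_history size_rcons.
have -> : (n.-1 - size h = (n.-1 - (size h).+1).+1)%N by lia.
by rewrite /= sp.
Qed.

Definition with_price s m p : profile R A :=
  Profile (fun j => if j == m then fun _ => p else pstrat s j) (cstrat s).

Lemma deviation_with_price s m p : deviation n m s (with_price s m p).
Proof. by split=> // j /negbTE /= ->. Qed.

Lemma extend_with_price s m p f h :
  (m <= size h)%N -> extend (with_price s m p) f h = extend s f h.
Proof.
elim: f h => [|f IH] h hm //=.
by rewrite gtn_eqF ?ltnS // IH // size_rcons leqW.
Qed.

Lemma full_history_with_price s h p : (size h < n.-1)%N ->
  full_history n (with_price s (size h).+1 p) h = full_history n s (rcons h p).
Proof.
move=> hlt; rewrite (full_history_rcons (p := p) hlt) /= ?eqxx //.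
by rewrite /full_history extend_with_price // size_rcons.
Qed.

Lemma price_cat h t j a : (j - 2 < size h)%N -> price (h ++ t) j a = price h j a.
Proof. by move=> hj; rewrite /price nth_cat hj. Qed.

Lemma price_cat_size h p t a : price (h ++ p :: t) (size h).+2 a = sval p a.
Proof. by rewrite /price !subSS subn0 nth_cat ltnn subnn. Qed.

Lemma game_payoff_rcons u s h j : (size h < n.-1)%N ->
  game_payoff u n s h j = game_payoff u n s (rcons h (pstrat s (size h).+1 h)) j.
Proof. by move=> hlt; rewrite /game_payoff /outcome_option -full_history_rcons. Qed.

Lemma outcome_option_rcons s h : (size h < n.-1)%N ->
  outcome_option n s h = outcome_option n s (rcons h (pstrat s (size h).+1 h)).
Proof. by move=> hlt; rewrite /outcome_option -full_history_rcons. Qed.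

Lemma game_payoff_with_price u s h p j : (size h < n.-1)%N ->
  game_payoff u n (with_price s (size h).+1 p) h j = game_payoff u n s (rcons h p) j.
Proof. by move=> hlt; rewrite /game_payoff /outcome_option full_history_with_price. Qed.

End Histories.

Section BackwardInduction.

Variables (R : realFieldType) (A : finType) (u : nat -> A -> R) (n : nat).
Variable s : profile R A.
Hypothesis n_gt0 : (0 < n)%N.
Hypothesis spe : is_SPE u n s.
Implicit Types (h : seq (Pv R A)) (p : Pv R A).

Definition utail m a := \sum_(m <= j < n.+1) u j a.

Definition avg_tail m := \sum_(m <= j < n.+1) Avg u j.

(* The welfare of players [m..n] at option [a] after history [h], net of the price
   [p^m] that player [m] pays to player [m-1]. *)
Definition residual m h a :=
  utail m a - (if (2 <= m)%N then price h m a else 0).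

Definition subgame_solved h : Prop :=
  [/\ forall b, residual (size h).+1 h b <= residual (size h).+1 h (outcome_option n s h),
      forall j, ((size h).+1 < j <= n)%N -> game_payoff u n s h j = Avg u j &
      game_payoff u n s h (size h).+1 =
        residual (size h).+1 h (outcome_option n s h) - avg_tail (size h).+2].

Lemma utail_recl m a : (m <= n)%N -> utail m a = u m a + utail m.+1 a.
Proof. by move=> mn; rewrite /utail big_ltn. Qed.

Lemma avg_tail_recl m : (m <= n)%N -> avg_tail m = Avg u m + avg_tail m.+1.
Proof. by move=> mn; rewrite /avg_tail big_ltn. Qed.

Lemma sum_utail (a0 : A) m : \sum_a utail m a = #|A|%:R * avg_tail m.
Proof.
have k_neq0 : #|A|%:R != 0 :> R by rewrite gt_eqF // (natr_card_gt0 R a0).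
rewrite exchange_big mulr_sumr; apply: eq_bigr => j _.
by rewrite /Avg mulrA mulfV // mul1r.
Qed.

Lemma residual_rcons h p a :
  residual (size h).+2 (rcons h p) a = utail (size h).+2 a - sval p a.
Proof. by rewrite /residual -cats1 price_cat_size. Qed.

Lemma game_payoff_price_setter h p : ((size h).+1 < n)%N ->
  let a := outcome_option n s (rcons h p) in
  game_payoff u n s (rcons h p) (size h).+1 =
    residual (size h).+1 h a - (utail (size h).+2 a - sval p a).
Proof.
move=> hlt a; rewrite /game_payoff -/a /full_history.
have [t ->] := extend_cat s (n.-1 - size (rcons h p)) (rcons h p).
rewrite /payoff /residual hlt -cats1 -catA /= price_cat_size (utail_recl _ (ltnW hlt)).
have [m_ge2 | _] := leqP 2 (size h).+1; last by ring.
by rewrite price_cat; [ring | lia].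
Qed.

Lemma subgame_solved_last h : size h = n.-1 -> subgame_solved h.
Proof.
move=> hsz; have hm : (size h).+1 = n by lia.
have full_h s' : full_history n s' h = h by rewrite /full_history hsz subnn.
have payoff_last a : payoff u n n h a = residual n h a.
  rewrite /payoff /residual utail_recl // /utail big_geq // ltnn; ring.
rewrite /subgame_solved hm /avg_tail big_geq // subr0.
rewrite /game_payoff /outcome_option full_h payoff_last; split=> // [b|j]; last lia.
have dev : deviation n n s (Profile (pstrat s) (fun _ => b)) by split; rewrite ?eqxx.
have := spe (h := h) _ _ dev; rewrite /game_payoff /outcome_option !full_h !payoff_last.
by apply; lia.
Qed.

Lemma subgame_solved_rcons h : (size h < n.-1)%N ->
  (forall p, subgame_solved (rcons h p)) -> subgame_solved h.
Proof.
move=> hlt solved; set m := (size h).+1; set ps := pstrat s m h.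
pose br p := outcome_option n s (rcons h p).
have br_best p a : utail m.+1 a - sval p a <= utail m.+1 (br p) - sval p (br p).
  by have [best _ _] := solved p; move: (best a); rewrite size_rcons !residual_rcons.
have ps_best p : residual m h (br p) - (utail m.+1 (br p) - sval p (br p)) <=
                 residual m h (br ps) - (utail m.+1 (br ps) - sval ps (br ps)).
  rewrite -!game_payoff_price_setter; try lia.
  rewrite -game_payoff_rcons // -game_payoff_with_price //.
  by apply: spe; [lia | lia | exact: deviation_with_price].
have [res_best follower_avg] :=
  leader_follower_outcome (W := residual m h) (sum_utail (br ps) m.+1) br_best ps_best.
have [_ later_avg follower_payoff] := solved ps; rewrite size_rcons in later_avg follower_payoff.
rewrite /subgame_solved (outcome_option_rcons s hlt) -/m -/ps; split=> // [j /andP[mj jn]|].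
  rewrite game_payoff_rcons //; have [-> | j_neq] := eqVneq j m.+1.
    by rewrite follower_payoff residual_rcons follower_avg avg_tail_recl ?addrK //; lia.
  by apply: later_avg; lia.
by rewrite game_payoff_rcons // game_payoff_price_setter 1?follower_avg //; lia.
Qed.

Lemma subgame_solved_all h : (size h <= n.-1)%N -> subgame_solved h.
Proof.
move=> hle; have [d] : exists d, (n.-1 - size h)%N = d by exists (n.-1 - size h)%N.
elim: d h hle => [|d IH] h hle hd.
  by apply: subgame_solved_last; lia.
apply: subgame_solved_rcons => [|p]; first lia.
by apply: IH; rewrite size_rcons; lia.
Qed.

End BackwardInduction.

Theorem mainTheorem7 (R : realType) (A : finType) (a0 : A) (n : nat)
    (hn : (2 <= n)%N) (u : nat -> A -> R) (s : profile R A) :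
  is_SPE u n s ->
  (forall j, (2 <= j <= n)%N -> game_payoff u n s [::] j = Avg u j) /\
  game_payoff u n s [::] 1 = maxu u n a0 - \sum_(2 <= j < n.+1) Avg u j.
Proof.
move=> spe.
have [welfare_best later_avg first_payoff] :=
  subgame_solved_all (ltnW hn) spe (leq0n (n.-1)) (h := [::]).
have residual_sumu a : residual u n 1 [::] a = sumu u n a by rewrite /residual subr0.
split=> //; rewrite first_payoff residual_sumu; congr (_ - _).
apply/le_anti; rewrite le_bigmax /=.
by apply: bigmax_le => [|a _]; rewrite -!residual_sumu welfare_best.
Qed.
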